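(* Let $m,n\in\mathbb{N}$ with $n\le m\le 2n$. Let $L>0$, $C>1$, $\Gamma\subseteq\mathbb{Z}_n$, $r=20C(\log(|\Gamma|/2)+1)$, and $\tau<\frac{L}{20}\cdot\frac{1}{3+2\log(n)}$. Let $f:\mathbb{Z}_n\to\mathbb{C}$ and suppose that $|\alpha-\alpha'|_n>r$ for all distinct $\alpha,\alpha'\in\Gamma$, that $L\le|\widehat f(\alpha)|\le CL$ for all $\alpha\in\Gamma$, and that $|\widehat f(\alpha)|\le\tau$ for all $\alpha\notin\Gamma$. Then $|\widehat{\widetilde f}(\lfloor\frac mn\alpha\rceil)|\ge\frac15L$ for all $\alpha\in\Gamma$.
   Context: $\mathbb{Z}_n=\{0,\dots,n-1\}$ with addition mod $n$; elements are treated as these integer representatives. For $h:\mathbb{Z}_n\to\mathbb{C}$, $\widehat h(\alpha)=\frac1n\sum_{x\in\mathbb{Z}_n}h(x)\exp(-2\pi i\alpha x/n)$ (analogously on $\mathbb{Z}_m$). $\widetilde f:\mathbb{Z}_m\to\mathbb{C}$ is $\widetilde f(x)=f(x)$ for $0\le x<\min(n,m)$ and $0$ otherwise. $\lfloor x\rceil$ is the integer nearest to $x$, taken in $\mathbb{Z}_m$. For $k\in\mathbb{N}$, $x\in\mathbb{R}$: $|x|_k=\min\{|x-kz|:z\in\mathbb{Z}\}$. $\log$ is the natural logarithm. *)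

From Stdlib Require Import Reals Lra Lia ZArith List.
From Coquelicot Require Import Coquelicot.
Open Scope R_scope.

Definition cexpi (t : R) : C := (cos t, sin t).

Fixpoint csum (k : nat) (g : nat -> C) : C :=
  match k with
  | O => 0%C
  | S k' => (csum k' g + g k')%C
  end.

(* Fourier coefficient on Z_n (elements = representatives 0..n-1):
   hat h (alpha) = 1/n * sum_{x in Z_n} h x * exp(-2 pi i alpha x / n) *)
Definition fhat (n : nat) (h : nat -> C) (alpha : nat) : C :=
  (RtoC (/ INR n) *
   csum n (fun x => h x * cexpi (- 2 * PI * INR alpha * INR x / INR n)))%C.

Definition ftilde (n m : nat) (f : nat -> C) (x : nat) : C :=
  if (x <? Nat.min n m)%nat then f x else 0%C.

(* nearest integer to x (ties rounded up), taken in Z_m *)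
Definition round_mod (m : nat) (x : R) : nat :=
  (Z.to_nat (Int_part (x + / 2)) mod m)%nat.

Definition absk (k : nat) (x : R) (d : R) : Prop :=
  (exists z : Z, d = Rabs (x - INR k * IZR z)) /\
  (forall z : Z, d <= Rabs (x - INR k * IZR z)).

(** Fourier inversion on Z_n gives
      hat(ftilde)(k) = sum_(g < n) hat(f)(g) * (1/m) * D_n(g/n - k/m),
    with D_n(d) = sum_(x < n) exp(2 pi i d x) the Dirichlet kernel, whose modulus is
    |sin(pi n d) / sin(pi d)|.  For k the rounding of m alpha / n, the term g = alpha has
    |d| <= 1/(2m); as n/m >= 1/2, it has modulus at least (11/25) |hat(f)(alpha)| >= (11/25) L.
    For g <> alpha the kernel is at most (5/9) / (|g - alpha|_n - 1/2).  On each side of alpha,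
    points that are r-separated (and at distance >= r from alpha) have their i-th nearest point at
    distance >= i r, so their weights add up to O(H_k / r) with H_k the harmonic numbers.  With
    r = 1 and coefficients <= tau this costs at most L/18; over Gamma, with coefficients <= C L and
    r its separation, at most L/8.  Hence the coefficient is at least (11/25 - 1/18 - 1/8) L > L/5. *)

From Stdlib Require Import Reals Lra Lia List ZArith.
From Coquelicot Require Import Coquelicot.
Open Scope R_scope.

(** * Finite sums *)

Lemma csum_ext k g h : (forall x, (x < k)%nat -> g x = h x) -> csum k g = csum k h.
Proof.
  induction k as [|k IH]; intros H; simpl; [reflexivity|].
  rewrite IH, H; [reflexivity | lia | intros; apply H; lia].
Qed.

Lemma csum_plus k g h : csum k (fun x => g x + h x)%C = (csum k g + csum k h)%C.
Proof. induction k as [|k IH]; simpl; [ring|]. rewrite IH. ring. Qed.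

Lemma csum_scal k c g : csum k (fun x => c * g x)%C = (c * csum k g)%C.
Proof. induction k as [|k IH]; simpl; [ring|]. rewrite IH. ring. Qed.

Lemma csum_zero k : csum k (fun _ => 0%C) = 0%C.
Proof. induction k as [|k IH]; simpl; [reflexivity|]. rewrite IH. ring. Qed.

Lemma csum_swap k p (h : nat -> nat -> C) :
  csum k (fun x => csum p (h x)) = csum p (fun y => csum k (fun x => h x y)).
Proof.
  induction k as [|k IH]; simpl; [symmetry; apply csum_zero|].
  rewrite IH, <- csum_plus. reflexivity.
Qed.

Lemma csum_delta k a g : (a < k)%nat ->
  csum k (fun x => if (x =? a)%nat then g x else 0%C) = g a.
Proof.
  induction k as [|k IH]; intros Ha; [lia|]. simpl.
  destruct (Nat.eqb_spec k a) as [->|Hne].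
  - rewrite (csum_ext _ _ (fun _ => 0%C)), csum_zero; [ring|].
    intros x Hx. destruct (Nat.eqb_spec x a); [lia|reflexivity].
  - rewrite IH by lia. ring.
Qed.

Lemma csum_app k j g : csum (k + j) g = (csum k g + csum j (fun x => g (k + x)%nat))%C.
Proof.
  induction j as [|j IH]; simpl; [rewrite Nat.add_0_r; ring|].
  rewrite Nat.add_succ_r. simpl. rewrite IH. ring.
Qed.

Definition lsum (l : list nat) (w : nat -> R) : R := fold_right (fun x s => w x + s) 0 l.

Lemma lsum_app l1 l2 w : lsum (l1 ++ l2) w = lsum l1 w + lsum l2 w.
Proof. induction l1 as [|x l1 IH]; simpl; [ring|]. rewrite IH. ring. Qed.

Lemma lsum_le l v w : (forall x, In x l -> v x <= w x) -> lsum l v <= lsum l w.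
Proof.
  induction l as [|x l IH]; intros H; simpl; [lra|].
  apply Rplus_le_compat; [apply H; left | apply IH; intros; apply H; right]; auto.
Qed.

Lemma lsum_plus l v w : lsum l (fun x => v x + w x) = lsum l v + lsum l w.
Proof. induction l as [|x l IH]; simpl; [ring|]. rewrite IH. ring. Qed.

Lemma lsum_scal l c w : lsum l (fun x => c * w x) = c * lsum l w.
Proof. induction l as [|x l IH]; simpl; [ring|]. rewrite IH. ring. Qed.

Lemma lsum_filter (p : nat -> bool) l w :
  lsum (filter p l) w = lsum l (fun x => if p x then w x else 0).
Proof.
  induction l as [|x l IH]; simpl; [reflexivity|].
  destruct (p x); simpl; rewrite IH; ring.
Qed.

Lemma Cmod_csum_le k g : Cmod (csum k g) <= lsum (seq 0 k) (fun x => Cmod (g x)).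
Proof.
  induction k as [|k IH]; [simpl; rewrite Cmod_0; lra|].
  cbn [csum]. rewrite seq_S, lsum_app. simpl.
  pose proof (Cmod_triangle (csum k g) (g k)). lra.
Qed.

Lemma Cmod_csum_peak k a g : (a < k)%nat ->
  Cmod (g a) - lsum (filter (fun x => negb (x =? a)) (seq 0 k)) (fun x => Cmod (g x))
  <= Cmod (csum k g).
Proof.
  intros Ha.
  set (g' := fun x => if (x =? a)%nat then RtoC 0 else g x).
  assert (Hsplit : csum k g = (g a + csum k g')%C).
  { rewrite <- (csum_delta k a g Ha), <- csum_plus. apply csum_ext.
    intros x _. unfold g'. destruct (x =? a)%nat; ring. }
  assert (Htail : Cmod (csum k g') <=
                  lsum (filter (fun x => negb (x =? a)) (seq 0 k)) (fun x => Cmod (g x))).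
  { rewrite lsum_filter. eapply Rle_trans; [apply Cmod_csum_le|].
    apply lsum_le. intros x _. unfold g'. destruct (x =? a)%nat; simpl; [rewrite Cmod_0|]; lra. }
  rewrite Hsplit.
  pose proof (Cmod_triangle (g a + csum k g') (- csum k g')) as H.
  rewrite Cmod_opp in H. replace (g a + csum k g' + - csum k g')%C with (g a) in H by ring.
  lra.
Qed.

(** * Fourier analysis on Z_n *)

Lemma cexpi_add s t : (cexpi s * cexpi t)%C = cexpi (s + t).
Proof. unfold cexpi, Cmult; simpl. rewrite cos_plus, sin_plus. f_equal; ring. Qed.

Lemma cexpi_0 : cexpi 0 = 1%C.
Proof. unfold cexpi. now rewrite cos_0, sin_0. Qed.

Lemma cexpi_period t k : cexpi (t + 2 * PI * INR k) = cexpi t.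
Proof.
  unfold cexpi. replace (t + 2 * PI * INR k) with (t + 2 * INR k * PI) by ring.
  now rewrite cos_period, sin_period.
Qed.

Lemma Cmod_cexpi_sub1 t : Cmod (cexpi t - 1) = 2 * Rabs (sin (t / 2)).
Proof.
  unfold Cmod, cexpi; simpl.
  set (u := t / 2). replace t with (2 * u) by (unfold u; field).
  rewrite cos_2a_sin, sin_2a.
  pose proof (sin2_cos2 u) as H. unfold Rsqr in H.
  match goal with |- sqrt ?x = _ => replace x with (Rsqr (2 * sin u)) by (unfold Rsqr; nra) end.
  rewrite sqrt_Rsqr_abs, Rabs_mult, (Rabs_right 2) by lra. reflexivity.
Qed.

Definition dirichlet (n : nat) (d : R) : C := csum n (fun x => cexpi (2 * PI * d * INR x)).

Lemma dirichlet_geom n d :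
  ((cexpi (2 * PI * d) - 1) * dirichlet n d = cexpi (2 * PI * d * INR n) - 1)%C.
Proof.
  unfold dirichlet. induction n as [|n IH]; simpl csum.
  - change (INR 0) with 0. rewrite Rmult_0_r, cexpi_0. ring.
  - rewrite Cmult_plus_distr_l, IH, S_INR.
    replace (cexpi (2 * PI * d * (INR n + 1)))
      with (cexpi (2 * PI * d) * cexpi (2 * PI * d * INR n))%C
      by (rewrite cexpi_add; f_equal; ring).
    ring.
Qed.

Lemma Cmod_dirichlet n d :
  Cmod (dirichlet n d) * Rabs (sin (PI * d)) = Rabs (sin (PI * d * INR n)).
Proof.
  pose proof (f_equal Cmod (dirichlet_geom n d)) as H.
  rewrite Cmod_mult, !Cmod_cexpi_sub1 in H.
  replace (2 * PI * d / 2) with (PI * d) in H by field.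
  replace (2 * PI * d * INR n / 2) with (PI * d * INR n) in H by field.
  lra.
Qed.

Lemma dirichlet_0 n : dirichlet n 0 = RtoC (INR n).
Proof.
  unfold dirichlet. induction n as [|n IH]; simpl csum; [reflexivity|].
  rewrite IH, Rmult_0_r, Rmult_0_l, cexpi_0, S_INR, RtoC_plus. reflexivity.
Qed.

Lemma dirichlet_shift n d k : dirichlet n (d - INR k) = dirichlet n d.
Proof.
  apply csum_ext. intros x _.
  rewrite <- (cexpi_period _ (k * x)). f_equal. rewrite mult_INR. ring.
Qed.

Lemma dirichlet_orth n x y : (x < n)%nat -> (y < n)%nat -> x <> y ->
  dirichlet n ((INR x - INR y) / INR n) = 0%C.
Proof.
  intros Hx Hy Hxy.
  assert (Hn : 0 < INR n) by (apply lt_0_INR; lia).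
  pose proof (Cmod_dirichlet n ((INR x - INR y) / INR n)) as H.
  replace (PI * ((INR x - INR y) / INR n) * INR n) with (IZR (Z.of_nat x - Z.of_nat y) * PI) in H
    by (rewrite minus_IZR, <- !INR_IZR_INZ; field; lra).
  rewrite (sin_eq_0_1 (IZR (Z.of_nat x - Z.of_nat y) * PI)), Rabs_R0 in H by (eexists; reflexivity).
  apply Cmod_eq_0, (Rmult_eq_reg_r (Rabs (sin (PI * ((INR x - INR y) / INR n))))); [lra|].
  apply Rabs_no_R0. intros Hs.
  (* a nonzero multiple of PI would force |x - y| >= n *)
  destruct (sin_eq_0_0 _ Hs) as [z Hz].
  assert (Hxy' : INR x - INR y = IZR z * INR n).
  { apply (Rmult_eq_reg_l PI); [|pose proof PI_RGT_0; lra].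
    rewrite <- (Rmult_1_r (INR x - INR y)), <- (Rinv_r (INR n)) by lra. nra. }
  assert (-1 < IZR z < 1) as [Hz1 Hz2].
  { pose proof (lt_INR _ _ Hx). pose proof (lt_INR _ _ Hy).
    pose proof (pos_INR x). pose proof (pos_INR y).
    split; apply (Rmult_lt_reg_r (INR n)); nra. }
  apply lt_IZR in Hz1. apply lt_IZR in Hz2.
  assert (z = 0%Z) by lia. subst z. apply Hxy, INR_eq. lra.
Qed.

Lemma fhat_inversion n f x : (x < n)%nat ->
  f x = csum n (fun g => fhat n f g * cexpi (2 * PI * INR g * INR x / INR n))%C.
Proof.
  intros Hx. assert (Hn : 0 < INR n) by (apply lt_0_INR; lia).
  transitivity (RtoC (/ INR n) * csum n (fun y => f y * dirichlet n ((INR x - INR y) / INR n)))%C.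
  - rewrite (csum_ext n _ (fun y => if (y =? x)%nat then (f y * RtoC (INR n))%C else RtoC 0)).
    + rewrite csum_delta, Cmult_comm, <- Cmult_assoc, <- RtoC_mult, Rinv_r by first [lia | lra].
      now rewrite Cmult_1_r.
    + intros y Hy. destruct (Nat.eqb_spec y x) as [->|Hne].
      * now rewrite Rminus_diag, Rdiv_0_l, dirichlet_0.
      * rewrite dirichlet_orth by auto. ring.
  - unfold fhat, dirichlet. rewrite <- !csum_scal.
    rewrite (csum_ext n _ (fun y => csum n (fun g =>
      RtoC (/ INR n) * (f y * cexpi (- 2 * PI * INR g * INR y / INR n))
      * cexpi (2 * PI * INR g * INR x / INR n))))%C.
    + rewrite csum_swap. apply csum_ext. intros g _.
      rewrite (Cmult_comm _ (cexpi _)), <- !csum_scal. apply csum_ext. intros y _. ring.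
    + intros y _. rewrite <- !csum_scal. apply csum_ext. intros g _.
      rewrite <- !Cmult_assoc, cexpi_add.
      replace (-2 * PI * INR g * INR y / INR n + 2 * PI * INR g * INR x / INR n)
        with (2 * PI * ((INR x - INR y) / INR n) * INR g) by (field; lra).
      reflexivity.
Qed.

Lemma fhat_mod m h k : (0 < m)%nat -> fhat m h (k mod m) = fhat m h k.
Proof.
  intros Hm. assert (HM : 0 < INR m) by (apply lt_0_INR; lia).
  assert (Hk : INR k = INR m * INR (k / m) + INR (k mod m))
    by (rewrite <- mult_INR, <- plus_INR, <- Nat.div_mod_eq; reflexivity).
  unfold fhat. f_equal. apply csum_ext. intros x _. f_equal.
  rewrite <- (cexpi_period (-2 * PI * INR k * INR x / INR m) (k / m * x)). f_equal.
  rewrite mult_INR, Hk. field. lra.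
Qed.

Lemma fhat_ftilde n m f k : (0 < n)%nat -> (n <= m)%nat ->
  fhat m (ftilde n m f) k =
  csum n (fun g => fhat n f g * (RtoC (/ INR m) * dirichlet n (INR g / INR n - INR k / INR m)))%C.
Proof.
  intros Hn Hnm.
  assert (HN : 0 < INR n) by (apply lt_0_INR; lia).
  assert (HM : 0 < INR m) by (apply lt_0_INR; lia).
  unfold fhat at 1. replace m with (n + (m - n))%nat at 2 by lia.
  rewrite csum_app, (csum_ext (m - n) _ (fun _ => RtoC 0)), csum_zero, Cplus_0_r.
  2: { intros x _. unfold ftilde. replace (Nat.min n m) with n by lia.
       destruct (Nat.ltb_spec (n + x) n); [lia|]. ring. }
  rewrite <- csum_scal.
  rewrite (csum_ext n _ (fun x => csum n (fun g =>
    fhat n f g * (RtoC (/ INR m) * cexpi (2 * PI * (INR g / INR n - INR k / INR m) * INR x)))))%C.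
  - rewrite csum_swap. apply csum_ext. intros g _.
    unfold dirichlet. now rewrite <- !csum_scal.
  - intros x Hx. unfold ftilde. replace (Nat.min n m) with n by lia.
    destruct (Nat.ltb_spec x n) as [_|]; [|lia].
    rewrite (fhat_inversion n f x Hx), (Cmult_comm (csum _ _)), <- csum_scal, <- csum_scal.
    apply csum_ext. intros g _.
    replace (2 * PI * (INR g / INR n - INR k / INR m) * INR x)
      with (2 * PI * INR g * INR x / INR n + - 2 * PI * INR k * INR x / INR m) by (field; lra).
    rewrite <- cexpi_add. ring.
Qed.

(** * Estimates of the Dirichlet kernel *)

Lemma PI_le_13_4 : PI <= 13 / 4.
Proof. destruct (PI_ineq 5) as [_ H]. unfold tg_alt, PI_tg in H. simpl in H. lra. Qed.

Lemma PI_ge_3 : 3 <= PI.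
Proof. destruct (PI_ineq 3) as [H _]. unfold tg_alt, PI_tg in H. simpl in H. lra. Qed.

Lemma Rabs_sin_le x : Rabs (sin x) <= Rabs x.
Proof.
  assert (Hpos : forall y, 0 <= y -> Rabs (sin y) <= y).
  { intros y Hy. apply Rabs_le. split.
    - destruct (Rle_lt_dec y PI) as [Hle|Hlt].
      + pose proof (sin_ge_0 y Hy Hle). lra.
      + pose proof (SIN_bound y). pose proof PI_ge_3. lra.
    - destruct (Req_dec y 0) as [->|Hne]; [rewrite sin_0; lra|].
      left. apply sin_lt_x. lra. }
  destruct (Rle_dec 0 x).
  - rewrite (Rabs_right x) by lra. auto.
  - rewrite (Rabs_left x), <- Rabs_Ropp, <- sin_neg by lra. apply Hpos. lra.
Qed.

Lemma sin_Rabs_le x : sin (Rabs x) <= Rabs (sin x).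
Proof.
  destruct (Rle_dec 0 x).
  - rewrite Rabs_right by lra. apply Rle_abs.
  - rewrite Rabs_left, sin_neg by lra. apply Rabs_maj2.
Qed.

Lemma sin_ge_cubic x : 0 <= x -> x <= PI -> x - x ^ 3 / 6 <= sin x.
Proof.
  intros H0 H1. destruct (sin_bound x 0 H0 H1) as [H _].
  unfold sin_approx, sin_term in H. simpl in H. lra.
Qed.

Lemma sin_PI_mul_ge u : 0 <= u <= 1 / 2 -> 9 / 5 * u <= sin (PI * u).
Proof.
  intros [H0 H1]. pose proof PI_ge_3. pose proof PI_le_13_4.
  assert (Hc : 9 / 5 <= PI - PI ^ 3 / 24).
  { assert (0 <= (13 / 4 - PI) * (PI ^ 2 + 13 / 4 * PI + 169 / 16 - 24)) by (apply Rmult_le_pos; nra).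
    nra. }
  assert (Hu : PI ^ 3 * u ^ 2 <= PI ^ 3 / 4).
  { assert (0 < PI ^ 3) by (apply pow_lt; lra). assert (u ^ 2 <= 1 / 4) by nra. nra. }
  assert (0 <= u * (PI ^ 3 / 4 - PI ^ 3 * u ^ 2)) by (apply Rmult_le_pos; lra).
  pose proof (sin_ge_cubic (PI * u) ltac:(nra) ltac:(nra)). nra.
Qed.

Lemma sin_PI_mul_ge_min y : 0 < y < 1 -> 9 / 5 * Rmin y (1 - y) <= sin (PI * y).
Proof.
  intros Hy. unfold Rmin. destruct (Rle_dec y (1 - y)).
  - apply sin_PI_mul_ge. lra.
  - replace (PI * y) with (PI - PI * (1 - y)) by ring. rewrite sin_PI_x. apply sin_PI_mul_ge. lra.
Qed.

Lemma dirichlet_upper n y : 0 < y < 1 -> Cmod (dirichlet n y) * sin (PI * y) <= 1.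
Proof.
  intros Hy. pose proof PI_RGT_0.
  assert (0 < sin (PI * y)) by (apply sin_gt_0; nra).
  rewrite <- (Rabs_right (sin (PI * y))), Cmod_dirichlet by lra.
  pose proof (SIN_bound (PI * y * INR n)). apply Rabs_le. lra.
Qed.

Lemma dirichlet_lower n d : Rabs (INR n * d) <= 1 / 2 ->
  INR n * (1 - PI ^ 2 * (INR n * d) ^ 2 / 6) <= Cmod (dirichlet n d).
Proof.
  intros Hd. pose proof PI_ge_3. pose proof (pos_INR n).
  destruct (Req_dec d 0) as [->|Hne].
  - rewrite dirichlet_0, Cmod_R, Rabs_right by lra. nra.
  - set (A := Rabs (INR n * d)).
    assert (HB : 0 < Rabs d) by (apply Rabs_pos_lt; exact Hne).
    assert (HA : PI * A = PI * Rabs d * INR n)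
      by (unfold A; rewrite Rabs_mult, (Rabs_right (INR n)) by lra; ring).
    assert (Hsq : (INR n * d) ^ 2 = A ^ 2) by (unfold A; rewrite pow2_abs; reflexivity).
    (* |D| |sin (PI d)| = |sin (PI d n)| >= sin (PI |n d|), and |sin (PI d)| <= PI |d| *)
    pose proof (Cmod_dirichlet n d) as Hmod.
    pose proof (sin_Rabs_le (PI * d * INR n)) as Hs.
    replace (Rabs (PI * d * INR n)) with (PI * A) in Hs
      by (unfold A; rewrite !Rabs_mult, (Rabs_right PI), (Rabs_right (INR n)) by lra; ring).
    assert (HA1 : 0 <= A <= 1 / 2) by (split; [apply Rabs_pos | exact Hd]).
    pose proof (sin_ge_cubic (PI * A) ltac:(nra) ltac:(nra)).
    pose proof (Rabs_sin_le (PI * d)) as Hsd.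
    rewrite Rabs_mult, (Rabs_right PI) in Hsd by lra.
    pose proof (Cmod_ge_0 (dirichlet n d)).
    assert (Cmod (dirichlet n d) * Rabs (sin (PI * d)) <= Cmod (dirichlet n d) * (PI * Rabs d))
      by (apply Rmult_le_compat_l; lra).
    apply (Rmult_le_reg_r (PI * Rabs d)); [nra|].
    assert (Hid : PI * A - (PI * A) ^ 3 / 6 = INR n * (1 - PI ^ 2 * A ^ 2 / 6) * (PI * Rabs d)).
    { replace ((PI * A) ^ 3) with (PI * A * (PI ^ 2 * A ^ 2)) by ring. rewrite HA. field. }
    rewrite Hsq. lra.
Qed.

Lemma Rabs_INR_mul_le n m d : (0 < m)%nat -> Rabs d <= / (2 * INR m) ->
  Rabs (INR n * d) <= INR n / INR m / 2.
Proof.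
  intros Hm Hd. assert (0 < INR m) by (apply lt_0_INR; lia).
  rewrite Rabs_mult, (Rabs_right (INR n)) by (apply Rle_ge, pos_INR).
  replace (INR n / INR m / 2) with (INR n * / (2 * INR m)) by (field; lra).
  apply Rmult_le_compat_l; [apply pos_INR | exact Hd].
Qed.

Lemma dirichlet_peak n m d : (0 < n)%nat -> (n <= m <= 2 * n)%nat -> Rabs d <= / (2 * INR m) ->
  11 / 25 <= / INR m * Cmod (dirichlet n d).
Proof.
  intros Hn Hm Hd.
  assert (HN : 1 <= INR n) by (apply (le_INR 1); lia).
  assert (HNM : INR n <= INR m <= 2 * INR n).
  { split; [apply le_INR; lia|].
    replace (2 * INR n) with (INR (2 * n)) by (rewrite mult_INR; reflexivity).
    apply le_INR; lia. }
  set (t := INR n / INR m).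
  assert (Ht : 1 / 2 <= t <= 1).
  { unfold t. split; [apply Rmult_le_reg_r with (INR m)|apply Rmult_le_reg_r with (INR m)]; try lra;
    replace (INR n / INR m * INR m) with (INR n) by (field; lra); lra. }
  assert (Hnd : Rabs (INR n * d) <= t / 2) by (apply Rabs_INR_mul_le; [lia | exact Hd]).
  pose proof (dirichlet_lower n d ltac:(lra)) as HG.
  assert (Hq : (INR n * d) ^ 2 <= t ^ 2 / 4).
  { rewrite <- pow2_abs. pose proof (Rabs_pos (INR n * d)). nra. }
  pose proof PI_le_13_4. pose proof PI_ge_3.
  assert (HP : PI ^ 2 * (INR n * d) ^ 2 <= 169 / 16 * (t ^ 2 / 4)).
  { apply Rmult_le_compat; try nra. }
  apply Rle_trans with (/ INR m * (INR n * (1 - PI ^ 2 * (INR n * d) ^ 2 / 6))).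
  - replace (/ INR m * (INR n * (1 - PI ^ 2 * (INR n * d) ^ 2 / 6)))
      with (t * (1 - PI ^ 2 * (INR n * d) ^ 2 / 6)) by (unfold t; field; lra).
    assert (0 <= (t - 1 / 2) * (1 - t) * (t + 3 / 2)) by (apply Rmult_le_pos; [apply Rmult_le_pos|]; lra).
    nra.
  - apply Rmult_le_compat_l; [apply Rlt_le, Rinv_0_lt_compat; lra | exact HG].
Qed.

Lemma dirichlet_tail n m r d : (0 < r < n)%nat -> (n <= m)%nat -> Rabs d <= / (2 * INR m) ->
  / INR m * Cmod (dirichlet n (INR r / INR n + d))
  <= 5 / 9 * / (Rmin (INR r) (INR n - INR r) - 1 / 2).
Proof.
  intros Hr Hnm Hd.
  assert (HN : 0 < INR n) by (apply lt_0_INR; lia).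
  assert (HNM : INR n <= INR m) by (apply le_INR; lia).
  assert (Hr1 : 1 <= INR r) by (apply (le_INR 1); lia).
  assert (Hr2 : INR r + 1 <= INR n) by (rewrite <- S_INR; apply le_INR; lia).
  pose proof (Rmin_l (INR r) (INR n - INR r)). pose proof (Rmin_r (INR r) (INR n - INR r)).
  set (v := Rmin (INR r) (INR n - INR r)) in *.
  assert (Hv : 1 <= v) by (apply Rmin_glb; lra).
  assert (Hnd : - (1 / 2) <= INR n * d <= 1 / 2).
  { apply Rabs_le_between. eapply Rle_trans; [apply (Rabs_INR_mul_le n m); [lia | exact Hd]|].
    assert (INR n / INR m <= 1)
      by (apply (Rmult_le_reg_r (INR m)); [lra|]; unfold Rdiv; rewrite Rmult_assoc, Rinv_l; lra).
    lra. }
  set (y := INR r / INR n + d).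
  assert (Hy : INR n * y = INR r + INR n * d) by (unfold y; field; lra).
  assert (Hy01 : 0 < y < 1) by (split; apply (Rmult_lt_reg_l (INR n)); lra).
  assert (Hmin : (v - 1 / 2) / INR n <= Rmin y (1 - y)).
  { apply Rmin_glb; apply (Rmult_le_reg_l (INR n)); try lra;
      replace (INR n * ((v - 1 / 2) / INR n)) with (v - 1 / 2) by (field; lra); lra. }
  assert (HD : Cmod (dirichlet n y) * (9 / 5 * ((v - 1 / 2) / INR n)) <= 1).
  { pose proof (sin_PI_mul_ge_min y Hy01). pose proof (Cmod_ge_0 (dirichlet n y)).
    eapply Rle_trans; [|apply (dirichlet_upper n y Hy01)]. apply Rmult_le_compat_l; lra. }
  apply (Rmult_le_reg_r (9 / 5 * (v - 1 / 2) * INR m)); [nra|].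
  replace (5 / 9 * / (v - 1 / 2) * (9 / 5 * (v - 1 / 2) * INR m)) with (INR m) by (field; lra).
  replace (/ INR m * Cmod (dirichlet n y) * (9 / 5 * (v - 1 / 2) * INR m))
    with (Cmod (dirichlet n y) * (9 / 5 * ((v - 1 / 2) / INR n)) * INR n) by (field; lra).
  nra.
Qed.

(** * Sums over separated points *)

Fixpoint harm (k : nat) : R :=
  match k with O => 0 | S k' => harm k' + / INR (S k') end.

Lemma harm_le k j : (k <= j)%nat -> harm k <= harm j.
Proof.
  induction 1 as [|j _ IH]; [lra|]. cbn [harm].
  pose proof (Rinv_0_lt_compat (INR (S j)) (lt_0_INR _ (Nat.lt_0_succ j))). lra.
Qed.

Lemma harm_le_ln k : (1 <= k)%nat -> harm k <= 1 + ln (INR k).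
Proof.
  induction k as [|k IH]; intros Hk; [lia|].
  destruct (Nat.eq_dec k 0) as [->|Hk0]; [simpl; rewrite ln_1; lra|].
  cbn [harm]. specialize (IH ltac:(lia)).
  assert (HK : 0 < INR k) by (apply lt_0_INR; lia).
  rewrite S_INR in *.
  (* 1/(k+1) <= ln (k+1) - ln k is ln y <= y - 1 at y = k/(k+1) *)
  pose proof (exp_ineq1_le (ln (INR k / (INR k + 1)))) as Hl.
  rewrite exp_ln in Hl by (apply Rdiv_lt_0_compat; lra).
  rewrite ln_div in Hl by lra.
  assert (INR k / (INR k + 1) - 1 = - / (INR k + 1)) by (field; lra).
  lra.
Qed.

Lemma ln2_lt_1 : ln 2 < 1.
Proof.
  rewrite <- (ln_exp 1). apply ln_increasing; [lra|].
  pose proof (exp_ineq1 1 ltac:(lra)). lra.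
Qed.

Lemma harm_pred_le_ln N : (2 <= N)%nat -> harm (N - 1) <= 2 * (ln (INR N / 2) + 1).
Proof.
  intros HN.
  assert (HN2 : 2 <= INR N) by (apply (le_INR 2); exact HN).
  assert (Hx : 0 <= ln (INR N / 2)).
  { rewrite <- ln_1. apply ln_le; lra. }
  pose proof (harm_le_ln (N - 1) ltac:(lia)) as Hh.
  rewrite minus_INR in Hh by lia. simpl in Hh.
  assert (ln (INR N - 1) <= ln (INR N)) by (apply ln_le; lra).
  assert (ln (INR N) = ln 2 + ln (INR N / 2)) by (rewrite <- ln_mult by lra; f_equal; field).
  pose proof ln2_lt_1. lra.
Qed.

Section SeparatedSums.

Variables (w : nat -> R) (r : R).
Hypothesis r_pos : 0 < r.

Definition separated (l : list nat) : Prop :=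
  (forall x, In x l -> r <= w x) /\
  (forall x y, In x l -> In y l -> x <> y -> r <= Rabs (w x - w y)).

Lemma separated_incl l l' : incl l' l -> separated l -> separated l'.
Proof. intros Hi [Hge Hsep]. split; intros; [apply Hge | apply Hsep]; auto. Qed.

Lemma exists_argmax l : l <> nil -> exists M, In M l /\ forall x, In x l -> w x <= w M.
Proof.
  induction l as [|a l IH]; intros Hne; [congruence|].
  destruct l as [|b l].
  - exists a. split; [left; reflexivity|]. intros x [<-|[]]. lra.
  - destruct (IH ltac:(discriminate)) as (M & HM & Hmax).
    destruct (Rle_lt_dec (w a) (w M)).
    + exists M. split; [right; exact HM|]. intros x [<-|Hx]; auto.
    + exists a. split; [left; reflexivity|]. intros x [<-|Hx]; [lra|]. specialize (Hmax x Hx). lra.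
Qed.

Lemma separated_max_ge l : NoDup l -> separated l ->
  forall M, In M l -> (forall x, In x l -> w x <= w M) -> INR (length l) * r <= w M.
Proof.
  remember (length l) as k eqn:Hk. revert l Hk.
  induction k as [|k IH]; intros l Hk Hnd Hsep M HM Hmax.
  - simpl. destruct Hsep as [Hge _]. specialize (Hge M HM). lra.
  - destruct (in_split M l HM) as (l1 & l2 & ->).
    rewrite length_app in Hk. simpl in Hk.
    assert (Hincl : incl (l1 ++ l2) (l1 ++ M :: l2))
      by (intros x Hx; apply in_app_or in Hx; apply in_or_app; simpl; tauto).
    pose proof (NoDup_remove_2 _ _ _ Hnd) as HMout.
    destruct k as [|k].
    + destruct Hsep as [Hge _]. specialize (Hge M HM). simpl. lra.
    + destruct (exists_argmax (l1 ++ l2)) as (M' & HM' & Hmax').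
      { intros E. rewrite E in Hincl. destruct l1, l2; simpl in Hk; try lia; discriminate. }
      assert (HkM' : INR (S k) * r <= w M').
      { apply (IH (l1 ++ l2)); auto.
        - rewrite length_app. lia.
        - exact (NoDup_remove_1 _ _ _ Hnd).
        - exact (separated_incl _ _ Hincl Hsep). }
      destruct Hsep as [_ Hsep].
      assert (HMM' : r <= Rabs (w M - w M')).
      { apply Hsep; auto. intros ->. contradiction. }
      specialize (Hmax M' (Hincl M' HM')).
      rewrite Rabs_right in HMM' by lra. rewrite S_INR. lra.
Qed.

Lemma lsum_inv_separated l : NoDup l -> separated l ->
  lsum l (fun x => / w x) <= harm (length l) / r.
Proof.
  remember (length l) as k eqn:Hk. revert l Hk.
  induction k as [|k IH]; intros l Hk Hnd Hsep.
  - destruct l; [simpl; lra | discriminate].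
  - destruct (exists_argmax l) as (M & HM & Hmax); [intros ->; discriminate|].
    pose proof (separated_max_ge l Hnd Hsep M HM Hmax) as Hbig. rewrite <- Hk in Hbig.
    destruct (in_split M l HM) as (l1 & l2 & ->).
    rewrite length_app in Hk. simpl in Hk.
    assert (Hincl : incl (l1 ++ l2) (l1 ++ M :: l2))
      by (intros x Hx; apply in_app_or in Hx; apply in_or_app; simpl; tauto).
    assert (IH' : lsum (l1 ++ l2) (fun x => / w x) <= harm k / r).
    { apply IH; [rewrite length_app; lia | exact (NoDup_remove_1 _ _ _ Hnd) |
                 exact (separated_incl _ _ Hincl Hsep)]. }
    rewrite lsum_app in IH' |- *.
    change (lsum (M :: l2) (fun x => / w x)) with (/ w M + lsum l2 (fun x => / w x)).
    assert (HS : 0 < INR (S k)) by (apply lt_0_INR; lia).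
    assert (/ w M <= / INR (S k) / r).
    { unfold Rdiv. rewrite <- Rinv_mult. apply Rinv_le_contravar; [nra | lra]. }
    cbn [harm]. replace ((harm k + / INR (S k)) / r) with (harm k / r + / INR (S k) / r) by (field; lra).
    lra.
Qed.

End SeparatedSums.

(** * Circular distance in Z_n *)

Definition offset (n a g : nat) : nat := if (a <=? g)%nat then (g - a)%nat else (g + n - a)%nat.

Definition circ_dist (n a g : nat) : R := Rmin (INR (offset n a g)) (INR n - INR (offset n a g)).

Lemma offset_lt n a g : (a < n)%nat -> (g < n)%nat -> (offset n a g < n)%nat.
Proof. unfold offset. destruct (Nat.leb_spec a g); lia. Qed.

Lemma offset_pos n a g : (a < n)%nat -> (g < n)%nat -> g <> a -> (0 < offset n a g)%nat.
Proof. unfold offset. destruct (Nat.leb_spec a g); lia. Qed.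

Lemma offset_inj n a g g' : (a < n)%nat -> (g < n)%nat -> (g' < n)%nat ->
  offset n a g = offset n a g' -> g = g'.
Proof. unfold offset. destruct (Nat.leb_spec a g), (Nat.leb_spec a g'); lia. Qed.

Lemma offset_wrap n a g : (a < n)%nat -> (g < n)%nat ->
  exists e : nat, INR g = INR a + INR (offset n a g) - INR n * INR e.
Proof.
  intros Ha Hg. unfold offset. destruct (Nat.leb_spec a g).
  - exists 0%nat. rewrite minus_INR by lia. simpl. ring.
  - exists 1%nat. rewrite minus_INR, plus_INR by lia. simpl. ring.
Qed.

Lemma circ_dist_ge1 n a g : (a < n)%nat -> (g < n)%nat -> g <> a -> 1 <= circ_dist n a g.
Proof.
  intros Ha Hg Hne. unfold circ_dist.
  pose proof (offset_pos n a g Ha Hg Hne). pose proof (offset_lt n a g Ha Hg).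
  apply Rmin_glb; [apply (le_INR 1); lia|].
  rewrite <- minus_INR by lia. apply (le_INR 1). lia.
Qed.

Lemma absk_exists n x : (0 < n)%nat -> Rabs x < INR n -> exists d, absk n x d.
Proof.
  intros Hn Hx. exists (Rmin (Rabs x) (INR n - Rabs x)). split.
  - unfold Rmin. destruct (Rle_dec (Rabs x) (INR n - Rabs x)).
    + exists 0%Z. f_equal. simpl. ring.
    + destruct (Rle_dec 0 x).
      * exists 1%Z. rewrite (Rabs_right x) in * by lra. rewrite Rabs_left1 by (simpl; lra). simpl. ring.
      * exists (-1)%Z. rewrite (Rabs_left x) in * by lra. rewrite Rabs_right by (simpl; lra). simpl. ring.
  - intros z. destruct (Z.eq_dec z 0) as [->|Hz].
    + rewrite Rmult_0_r, Rminus_0_r. apply Rmin_l.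
    + eapply Rle_trans; [apply Rmin_r|].
      assert (Hz1 : 1 <= Rabs (IZR z)).
      { rewrite <- abs_IZR. apply IZR_le. lia. }
      pose proof (Rabs_triang_inv (INR n * IZR z) x) as Htri.
      rewrite Rabs_mult, (Rabs_right (INR n)) in Htri by (apply Rle_ge, pos_INR).
      rewrite <- (Rabs_Ropp (x - _)). replace (- (x - INR n * IZR z)) with (INR n * IZR z - x) by ring.
      pose proof (pos_INR n). nra.
Qed.

Lemma absk_lt_shift n x r : (0 < n)%nat -> Rabs x < INR n ->
  (forall d, absk n x d -> r < d) -> forall z, r < Rabs (x - INR n * IZR z).
Proof.
  intros Hn Hx Hsep z. destruct (absk_exists n x Hn Hx) as [d Hd].
  specialize (Hsep d Hd). destruct Hd as [_ Hmin]. specialize (Hmin z). lra.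
Qed.

Lemma Rabs_INR_sub_ge1 p q : p <> q -> 1 <= Rabs (INR p - INR q).
Proof.
  intros Hpq. destruct (Nat.lt_total p q) as [H|[H|H]]; [|contradiction|];
    apply le_INR in H; rewrite S_INR in H.
  - rewrite Rabs_left; lra.
  - rewrite Rabs_right; lra.
Qed.

Lemma Rabs_INR_sub_lt n g g' : (g < n)%nat -> (g' < n)%nat -> Rabs (INR g - INR g') < INR n.
Proof.
  intros. pose proof (lt_INR _ _ H). pose proof (lt_INR _ _ H0).
  pose proof (pos_INR g). pose proof (pos_INR g'). apply Rabs_def1; lra.
Qed.

Lemma offset_sep n a g g' r : (a < n)%nat -> (g < n)%nat -> (g' < n)%nat ->
  (forall d, absk n (INR g - INR g') d -> r < d) ->
  r < Rabs (INR (offset n a g) - INR (offset n a g')).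
Proof.
  intros Ha Hg Hg' Hsep.
  destruct (offset_wrap n a g Ha Hg) as [e He], (offset_wrap n a g' Ha Hg') as [e' He'].
  pose proof (absk_lt_shift n _ r ltac:(lia) (Rabs_INR_sub_lt n g g' Hg Hg') Hsep
                (Z.of_nat e' - Z.of_nat e)) as H.
  rewrite minus_IZR, <- !INR_IZR_INZ in H.
  replace (INR g - INR g' - INR n * (INR e' - INR e))
    with (INR (offset n a g) - INR (offset n a g')) in H by lra.
  exact H.
Qed.

Lemma circ_dist_sep n a g r : (a < n)%nat -> (g < n)%nat ->
  (forall d, absk n (INR g - INR a) d -> r < d) -> r < circ_dist n a g.
Proof.
  intros Ha Hg Hsep.
  destruct (offset_wrap n a g Ha Hg) as [e He].
  pose proof (absk_lt_shift n _ r ltac:(lia) (Rabs_INR_sub_lt n g a Hg Ha) Hsep) as H.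
  pose proof (H (- Z.of_nat e)%Z) as H1. pose proof (H (1 - Z.of_nat e)%Z) as H2.
  rewrite opp_IZR, <- INR_IZR_INZ in H1. rewrite minus_IZR, <- INR_IZR_INZ in H2.
  pose proof (lt_INR _ _ (offset_lt n a g Ha Hg)). pose proof (pos_INR (offset n a g)).
  replace (INR g - INR a - INR n * - INR e) with (INR (offset n a g)) in H1 by lra.
  replace (INR g - INR a - INR n * (IZR 1 - INR e)) with (- (INR n - INR (offset n a g))) in H2 by lra.
  rewrite Rabs_Ropp in H2. rewrite Rabs_right in H1, H2 by lra.
  apply Rmin_glb_lt; assumption.
Qed.

Lemma lsum_inv_circ_dist n a l r s : 0 <= s < r -> NoDup l ->
  (forall g, In g l -> r <= circ_dist n a g) ->
  (forall g g', In g l -> In g' l -> g <> g' ->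
     r <= Rabs (INR (offset n a g) - INR (offset n a g'))) ->
  lsum l (fun g => / (circ_dist n a g - s)) <= 2 * harm (length l) / (r - s).
Proof.
  intros Hs Hnd Hdist Hsep.
  (* bound 1 / min(p, q) by 1 / p + 1 / q, p and q being the one-sided distances from a *)
  set (p := fun g => INR (offset n a g) - s).
  set (q := fun g => INR n - INR (offset n a g) - s).
  assert (Hp : separated p (r - s) l).
  { split.
    - intros g Hg. specialize (Hdist g Hg).
      pose proof (Rmin_l (INR (offset n a g)) (INR n - INR (offset n a g))).
      unfold circ_dist in Hdist. unfold p. lra.
    - intros g g' Hg Hg' Hne. specialize (Hsep g g' Hg Hg' Hne). unfold p.
      replace (INR (offset n a g) - s - (INR (offset n a g') - s))
        with (INR (offset n a g) - INR (offset n a g')) by ring. lra. }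
  assert (Hq : separated q (r - s) l).
  { split.
    - intros g Hg. specialize (Hdist g Hg).
      pose proof (Rmin_r (INR (offset n a g)) (INR n - INR (offset n a g))).
      unfold circ_dist in Hdist. unfold q. lra.
    - intros g g' Hg Hg' Hne. specialize (Hsep g g' Hg Hg' Hne). unfold q.
      rewrite <- Rabs_Ropp.
      replace (- (INR n - INR (offset n a g) - s - (INR n - INR (offset n a g') - s)))
        with (INR (offset n a g) - INR (offset n a g')) by ring. lra. }
  apply Rle_trans with (lsum l (fun g => / p g + / q g)).
  - apply lsum_le. intros g Hg.
    destruct Hp as [Hp _], Hq as [Hq _]. specialize (Hp g Hg). specialize (Hq g Hg).
    assert (0 < / p g) by (apply Rinv_0_lt_compat; lra).
    assert (0 < / q g) by (apply Rinv_0_lt_compat; lra).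
    unfold circ_dist, Rmin. destruct (Rle_dec _ _); fold (p g) (q g).
    + unfold p. lra.
    + unfold q. lra.
  - rewrite lsum_plus.
    pose proof (lsum_inv_separated p (r - s) ltac:(lra) l Hnd Hp).
    pose proof (lsum_inv_separated q (r - s) ltac:(lra) l Hnd Hq).
    replace (2 * harm (length l) / (r - s)) with (harm (length l) / (r - s) + harm (length l) / (r - s))
      by (field; lra).
    lra.
Qed.

Lemma round_error m n a : (0 < n)%nat -> (n <= m)%nat ->
  Rabs (INR a / INR n - INR (Z.to_nat (Int_part (INR m / INR n * INR a + / 2))) / INR m)
  <= / (2 * INR m).
Proof.
  intros Hn Hnm.
  assert (HN : 0 < INR n) by (apply lt_0_INR; lia).
  assert (HM : 0 < INR m) by (apply lt_0_INR; lia).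
  set (x := INR m / INR n * INR a).
  assert (Hx : 0 <= x)
    by (unfold x; apply Rmult_le_pos; [apply Rlt_le, Rdiv_lt_0_compat | apply pos_INR]; lra).
  destruct (base_Int_part (x + / 2)) as [H1 H2].
  set (z := Int_part (x + / 2)) in *.
  assert (Hz : (0 <= z)%Z) by (assert (Hz1 : IZR (-1) < IZR z) by lra; apply lt_IZR in Hz1; lia).
  rewrite (INR_IZR_INZ (Z.to_nat z)), Z2Nat.id by exact Hz.
  replace (INR a / INR n - IZR z / INR m) with ((x - IZR z) / INR m) by (unfold x; field; lra).
  unfold Rdiv. rewrite Rabs_mult, (Rabs_right (/ INR m)), Rinv_mult
    by (apply Rle_ge, Rlt_le, Rinv_0_lt_compat; lra).
  apply Rmult_le_compat_r; [apply Rlt_le, Rinv_0_lt_compat; lra|].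
  apply Rabs_le. lra.
Qed.

Lemma Cmod_kernel_term m z D : (0 < m)%nat ->
  Cmod (z * (RtoC (/ INR m) * D)) = Cmod z * (/ INR m * Cmod D).
Proof.
  intros Hm. rewrite !Cmod_mult, Cmod_R, Rabs_right; [reflexivity|].
  apply Rle_ge, Rlt_le, Rinv_0_lt_compat, lt_0_INR. exact Hm.
Qed.

Lemma dirichlet_offset n a g x : (a < n)%nat -> (g < n)%nat ->
  dirichlet n (INR g / INR n - x) = dirichlet n (INR (offset n a g) / INR n + (INR a / INR n - x)).
Proof.
  intros Ha Hg. assert (HN : 0 < INR n) by (apply lt_0_INR; lia).
  destruct (offset_wrap n a g Ha Hg) as [e He].
  rewrite <- (dirichlet_shift n (INR (offset n a g) / INR n + (INR a / INR n - x)) e).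
  f_equal. rewrite He. field. lra.
Qed.

Lemma tail_sum_all n a : (a < n)%nat ->
  lsum (filter (fun g => negb (g =? a)) (seq 0 n)) (fun g => / (circ_dist n a g - 1 / 2))
  <= 4 * (1 + ln (INR n)).
Proof.
  intros Ha.
  assert (Hin : forall g, In g (filter (fun g => negb (g =? a)) (seq 0 n)) -> (g < n)%nat /\ g <> a).
  { intros g Hg. apply filter_In in Hg as [Hg Hne]. apply in_seq in Hg.
    apply Bool.negb_true_iff, Nat.eqb_neq in Hne. split; [lia | exact Hne]. }
  eapply Rle_trans; [apply (lsum_inv_circ_dist n a _ 1 (1 / 2))|].
  - lra.
  - apply NoDup_filter, seq_NoDup.
  - intros g Hg. destruct (Hin g Hg). apply circ_dist_ge1; auto.
  - intros g g' Hg Hg' Hne. destruct (Hin g Hg), (Hin g' Hg').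
    apply Rabs_INR_sub_ge1. intros E. apply Hne, (offset_inj n a); auto.
  - assert (Hlen : harm (length (filter (fun g => negb (g =? a)) (seq 0 n))) <= 1 + ln (INR n)).
    { eapply Rle_trans; [apply harm_le | apply harm_le_ln; lia].
      rewrite <- (length_seq n 0) at 2. apply filter_length_le. }
    replace (1 - 1 / 2) with (/ 2) by field. lra.
Qed.

Lemma separation_weight_le Cc X h : 1 < Cc -> 1 <= X -> h <= 2 * X ->
  2 * h / (20 * Cc * X - 1 / 2) <= 9 / (40 * Cc).
Proof.
  intros HC HX Hh.
  assert (Hden : 0 < 20 * Cc * X - 1 / 2) by nra.
  apply Rle_trans with (4 * X / (20 * Cc * X - 1 / 2)).
  { unfold Rdiv. apply Rmult_le_compat_r; [apply Rlt_le, Rinv_0_lt_compat|]; lra. }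
  apply (Rmult_le_reg_r ((20 * Cc * X - 1 / 2) * (40 * Cc))); [nra|].
  replace (4 * X / (20 * Cc * X - 1 / 2) * ((20 * Cc * X - 1 / 2) * (40 * Cc)))
    with (160 * Cc * X) by (field; lra).
  replace (9 / (40 * Cc) * ((20 * Cc * X - 1 / 2) * (40 * Cc)))
    with (9 * (20 * Cc * X - 1 / 2)) by (field; lra).
  nra.
Qed.

Section OffPeak.

Variables (m n : nat) (Hnm : (n <= m)%nat).
Variables (L Cc tau : R) (HL : 0 < L) (HC : 1 < Cc).
Variables (Gamma : list nat) (HGsub : forall a, In a Gamma -> (a < n)%nat).
Hypothesis Htau : tau < L / 20 * (1 / (3 + 2 * ln (INR n))).
Variable f : nat -> C.
Hypothesis Hsep : forall a a', In a Gamma -> In a' Gamma -> a <> a' ->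
  forall d, absk n (INR a - INR a') d -> 20 * Cc * (ln (INR (length Gamma) / 2) + 1) < d.
Hypothesis Hbig : forall a, In a Gamma -> L <= Cmod (fhat n f a) <= Cc * L.
Hypothesis Hsmall : forall a, (a < n)%nat -> ~ In a Gamma -> Cmod (fhat n f a) <= tau.
Variables (a : nat) (HaG : In a Gamma).

Definition in_Gamma (g : nat) : bool := if in_dec Nat.eq_dec g Gamma then true else false.

Lemma tail_sum_sep :
  lsum (filter in_Gamma (filter (fun g => negb (g =? a)) (seq 0 n)))
    (fun g => / (circ_dist n a g - 1 / 2))
  <= 9 / (40 * Cc).
Proof.
  pose proof (HGsub a HaG) as Ha.
  remember (filter in_Gamma (filter (fun g => negb (g =? a)) (seq 0 n))) as l eqn:El.
  assert (Hl : forall g, In g l -> In g Gamma /\ g <> a).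
  { intros g Hg. rewrite El in Hg. apply filter_In in Hg as [Hg HinG]. apply filter_In in Hg as [_ Hne].
    unfold in_Gamma in HinG. destruct (in_dec Nat.eq_dec g Gamma); [|discriminate].
    apply Bool.negb_true_iff, Nat.eqb_neq in Hne. auto. }
  assert (Hnd : NoDup l) by (rewrite El; apply NoDup_filter, NoDup_filter, seq_NoDup).
  destruct l as [|g0 l0]; [simpl; apply Rlt_le, Rdiv_lt_0_compat; lra|].
  set (N := length Gamma) in *.
  set (X := ln (INR N / 2) + 1) in *.
  assert (Hlen : (length (g0 :: l0) + 1 <= N)%nat).
  { rewrite Nat.add_1_r. change (S (length (g0 :: l0))) with (length (a :: g0 :: l0)).
    apply NoDup_incl_length.
    - constructor; [intros Hin; apply (proj2 (Hl a Hin)); reflexivity | exact Hnd].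
    - intros x [<-|Hx]; [exact HaG | exact (proj1 (Hl x Hx))]. }
  assert (HX : 1 <= X).
  { assert (2 <= INR N) by (apply (le_INR 2); simpl in Hlen; lia).
    assert (0 <= ln (INR N / 2)) by (rewrite <- ln_1; apply ln_le; lra).
    unfold X. lra. }
  eapply Rle_trans; [apply (lsum_inv_circ_dist n a _ (20 * Cc * X) (1 / 2))|].
  - split; [lra | nra].
  - exact Hnd.
  - intros g Hg. destruct (Hl g Hg) as [HgG Hne].
    left. apply circ_dist_sep; auto. intros d Hd. exact (Hsep g a HgG HaG Hne d Hd).
  - intros g g' Hg Hg' Hne. destruct (Hl g Hg) as [HgG _], (Hl g' Hg') as [HgG' _].
    left. apply offset_sep; auto. intros d Hd. exact (Hsep g g' HgG HgG' Hne d Hd).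
  - apply separation_weight_le; auto.
    eapply Rle_trans; [apply (harm_le _ (N - 1)); lia | apply harm_pred_le_ln; simpl in Hlen; lia].
Qed.

Lemma tau_weight_le : Rmax tau 0 * (3 + 2 * ln (INR n)) <= L / 20.
Proof.
  assert (Hln : 0 <= ln (INR n)).
  { rewrite <- ln_1. apply ln_le; [lra|]. apply (le_INR 1). pose proof (HGsub a HaG). lia. }
  unfold Rmax. destruct (Rle_dec tau 0); [lra|].
  apply (Rmult_lt_compat_r (3 + 2 * ln (INR n))) in Htau; [|lra].
  replace (L / 20 * (1 / (3 + 2 * ln (INR n))) * (3 + 2 * ln (INR n))) with (L / 20) in Htau
    by (field; lra).
  lra.
Qed.

Section Rounding.

Variable k : nat.
Hypothesis Hk : Rabs (INR a / INR n - INR k / INR m) <= / (2 * INR m).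

(* [tau] may be negative, hence the weight [Rmax tau 0] for the coefficients off [Gamma]. *)
Lemma off_peak_term_le g : (g < n)%nat -> g <> a ->
  Cmod (fhat n f g * (RtoC (/ INR m) * dirichlet n (INR g / INR n - INR k / INR m)))
  <= 5 / 9 * Rmax tau 0 * / (circ_dist n a g - 1 / 2)
     + 5 / 9 * (Cc * L) * (if in_Gamma g then / (circ_dist n a g - 1 / 2) else 0).
Proof.
  intros Hg Hne. pose proof (HGsub a HaG) as Ha.
  assert (HW : 0 < / (circ_dist n a g - 1 / 2)).
  { apply Rinv_0_lt_compat. pose proof (circ_dist_ge1 n a g Ha Hg Hne). lra. }
  rewrite Cmod_kernel_term, (dirichlet_offset n a g) by lia.
  set (K := / INR m * Cmod (dirichlet n _)).
  assert (HK : 0 <= K <= 5 / 9 * / (circ_dist n a g - 1 / 2)).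
  { split.
    - apply Rmult_le_pos; [apply Rlt_le, Rinv_0_lt_compat, lt_0_INR; lia | apply Cmod_ge_0].
    - apply dirichlet_tail; auto. split; [apply offset_pos | apply offset_lt]; auto. }
  pose proof (Cmod_ge_0 (fhat n f g)). pose proof (Rmax_r tau 0).
  unfold in_Gamma. destruct (in_dec Nat.eq_dec g Gamma) as [HgG|HgG].
  - destruct (Hbig g HgG) as [_ Hup]. nra.
  - assert (Cmod (fhat n f g) <= Rmax tau 0)
      by (eapply Rle_trans; [apply (Hsmall g); auto | apply Rmax_l]).
    nra.
Qed.

Lemma tail_bound :
  lsum (filter (fun g => negb (g =? a)) (seq 0 n))
    (fun g => Cmod (fhat n f g * (RtoC (/ INR m) * dirichlet n (INR g / INR n - INR k / INR m))))
  <= L / 18 + L / 8.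
Proof.
  pose proof (HGsub a HaG) as Ha.
  eapply Rle_trans.
  { apply lsum_le. intros g Hg.
    apply filter_In in Hg as [Hg Hne]. apply in_seq in Hg. apply Bool.negb_true_iff, Nat.eqb_neq in Hne.
    apply off_peak_term_le; [lia | exact Hne]. }
  rewrite lsum_plus, !lsum_scal, <- lsum_filter.
  pose proof (tail_sum_all n a Ha). pose proof tail_sum_sep. pose proof tau_weight_le.
  pose proof (Rmax_r tau 0).
  assert (0 <= ln (INR n)) by (rewrite <- ln_1; apply ln_le; [lra | apply (le_INR 1); lia]).
  assert (5 / 9 * Rmax tau 0 * lsum (filter (fun g => negb (g =? a)) (seq 0 n))
            (fun g => / (circ_dist n a g - 1 / 2))
          <= 5 / 9 * Rmax tau 0 * (4 * (1 + ln (INR n)))) by (apply Rmult_le_compat_l; lra).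
  assert (5 / 9 * (Cc * L) * lsum (filter in_Gamma (filter (fun g => negb (g =? a)) (seq 0 n)))
            (fun g => / (circ_dist n a g - 1 / 2))
          <= 5 / 9 * (Cc * L) * (9 / (40 * Cc))) by (apply Rmult_le_compat_l; nra).
  replace (L / 8) with (5 / 9 * (Cc * L) * (9 / (40 * Cc))) by (field; lra).
  lra.
Qed.

End Rounding.

End OffPeak.

Theorem proposition5p3
  (m n : nat) (Hnm : (n <= m)%nat) (Hm2n : (m <= 2 * n)%nat)
  (L Cc tau : R) (HL : 0 < L) (HC : 1 < Cc)
  (Gamma : list nat) (HGnd : NoDup Gamma)
  (HGsub : forall a, In a Gamma -> (a < n)%nat)
  (Htau : tau < L / 20 * (1 / (3 + 2 * ln (INR n))))
  (f : nat -> C)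
  (Hsep : forall a a', In a Gamma -> In a' Gamma -> a <> a' ->
     forall d, absk n (INR a - INR a') d ->
       20 * Cc * (ln (INR (length Gamma) / 2) + 1) < d)
  (Hbig : forall a, In a Gamma ->
     L <= Cmod (fhat n f a) <= Cc * L)
  (Hsmall : forall a, (a < n)%nat -> ~ In a Gamma ->
     Cmod (fhat n f a) <= tau) :
  forall a, In a Gamma ->
    Cmod (fhat m (ftilde n m f) (round_mod m (INR m / INR n * INR a)))
      >= 1 / 5 * L.
Proof.
  intros a HaG.
  pose proof (HGsub a HaG) as Ha.
  unfold round_mod. set (k := Z.to_nat _).
  pose proof (round_error m n a ltac:(lia) Hnm) as Hd. fold k in Hd.
  rewrite fhat_mod, fhat_ftilde by lia.
  apply Rle_ge. eapply Rle_trans; [|apply (Cmod_csum_peak n a); exact Ha].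
  cbv beta. rewrite Cmod_kernel_term by lia.
  pose proof (tail_bound m n Hnm L Cc tau HL HC Gamma HGsub Htau f Hsep Hbig Hsmall a HaG k Hd)
    as Htail.
  pose proof (dirichlet_peak n m _ ltac:(lia) ltac:(lia) Hd) as Hmain.
  destruct (Hbig a HaG) as [Hlow _].
  nra.
Qed.
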